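(* Let $\rho$ be a finitary type and $K$ a class of $\rho$-dimensional t-algebras. Then $K$ is an Ft-variety if and only if $K$ is an Et-variety.
   Context: $\mathbb N=\{1,2,\dots\}$. A thread on $A$ is $s\in A^{\mathbb N}$; $r[a_1,\dots,a_n]$ is the thread with entries $a_i$ for $i\le n$ and $r_i$ for $i>n$; $r\equiv_{\mathbb N}s$ iff $\{i:r_i\neq s_i\}$ is finite, $[s]_{\mathbb N}$ its class. A trace on $A$ is a nonempty union of $\equiv_{\mathbb N}$-classes. A t-algebra of type $\tau$ and trace $\mathsf a$ is $(A,\mathsf a,\sigma^{\mathbf A})_{\sigma\in\tau}$ with $\sigma^{\mathbf A}:\mathsf a\to A$ arbitrary. t-subalgebra: $(B,\mathsf b,\sigma^{\mathbf A}|_{\mathsf b})$ with $B\subseteq A$, $\mathsf b\subseteq\mathsf a$ a trace on $B$, $\sigma^{\mathbf A}(\mathsf b)\subseteq B$. t-homomorphism: $f:A\to B$ with $f^{\mathbb N}(\mathsf a)\subseteq\mathsf b$ (coordinatewise) and $f\circ\sigma^{\mathbf A}=\sigma^{\mathbf B}\circ f^{\mathbb N}$; onto if $f$ and $f^{\mathbb N}:\mathsf a\to\mathsf b$ are surjective. t-product: universe $\prod_jA_j$, trace $\prod_j\mathsf a_j$ (with $(s^j)_j$ identified with the thread of entries $(s^j_k)_j$), operations componentwise. A t-variety is closed under t-homomorphic images, t-subalgebras, t-products. $\tau$-terms: least set containing $\mathsf e_1,\mathsf e_2,\dots$ and $\sigma(t_1,\dots,t_n,\mathsf e_{n+1},\dots)$;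 term operations $\mathsf e_i^{\mathbf A}(s)=s_i$, $\sigma(t_1,\dots,t_n,\mathsf e_{n+1},\dots)^{\mathbf A}(s)=\sigma^{\mathbf A}(s[t_1^{\mathbf A}(s),\dots,t_n^{\mathbf A}(s)])$. $\mathbf A_{\bar s}$: universe $A_{\bar s}=\{t^{\mathbf A}(s)\}$, trace $[s]_{\mathbb N}\cap(A_{\bar s})^{\mathbb N}$. An Et-variety is a t-variety $K$ such that ($\mathbf A_{\bar s}\in K$ for all $s\in\mathsf a$) implies $\mathbf A\in K$. An Ft-variety is a t-variety $K$ such that ($(A,\mathsf b,\sigma^{\mathbf A}|_{\mathsf b})\in K$ for every $\equiv_{\mathbb N}$-class $\mathsf b\subseteq\mathsf a$) implies $\mathbf A\in K$. A finitary type is $\rho=(\rho_n)_{n\ge0}$ (disjoint sets of $n$-ary symbols), $\rho^\star=\bigcup_n\rho_n$. A t-algebra of type $\rho^\star$ and trace $\mathsf a$ is $\rho$-dimensional if for every $\sigma\in\rho_n$ and $s,u\in\mathsf a$ with $s\equiv_{\mathbb N}u$ and $s_i=u_i$ for $i\le n$, $\sigma^{\mathbf A}(s)=\sigma^{\mathbf A}(u)$. *)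

(* Threads are indexed by nat = {0,1,...}; position i here
   corresponds to position i+1 of the paper (N = {1,2,...}). *)
From Stdlib Require Import List Arith Lia ClassicalEpsilon FunctionalExtensionality ProofIrrelevance.
Import ListNotations.
Set Implicit Arguments.

Definition equivN {A : Type} (r s : nat -> A) : Prop :=
  exists N, forall i, N <= i -> r i = s i.

Lemma equivN_refl {A} (s : nat -> A) : equivN s s.
Proof. exists 0; auto. Qed.

Lemma equivN_sym {A} (r s : nat -> A) : equivN r s -> equivN s r.
Proof. intros [N H]; exists N; intros; symmetry; auto. Qed.

Lemma equivN_trans {A} (r s u : nat -> A) : equivN r s -> equivN s u -> equivN r u.
Proof.
  intros [N H] [M H']; exists (N + M); intros i hi.
  rewrite H by lia; apply H'; lia.
Qed.

Record tAlg (tau : Type) := TAlg {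
  car : Type;
  tr : (nat -> car) -> Prop;
  tr_ne : exists s, tr s;
  tr_closed : forall r s, equivN r s -> tr r -> tr s;
  op : tau -> {s : nat -> car | tr s} -> car }.

Arguments car {tau} _.
Arguments tr {tau} _ _.
Arguments op {tau} _ _ _.

Definition upd {A : Type} (s : nat -> A) (l : list A) : nat -> A :=
  fun i => nth i l (s i).

Lemma upd_equiv {A} (s : nat -> A) l : equivN (upd s l) s.
Proof. exists (length l); intros i hi; unfold upd; apply nth_overflow; lia. Qed.

Lemma tr_upd {tau} (A : tAlg tau) (s : nat -> car A) l : tr A s -> tr A (upd s l).
Proof. intro h; apply (@tr_closed _ A s); [apply equivN_sym, upd_equiv | exact h]. Qed.

(** tau-terms: e_i (Var i) and sigma(t_1,...,t_n,e_{n+1},...) (App sigma [t_1;...;t_n]) *)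
Inductive term (tau : Type) : Type :=
| Var : nat -> term tau
| App : tau -> list (term tau) -> term tau.

Arguments Var {tau} _.
Arguments App {tau} _ _.

Fixpoint termop {tau} (A : tAlg tau) (t : term tau) (s : {s : nat -> car A | tr A s}) : car A :=
  match t with
  | Var i => proj1_sig s i
  | App sg ts =>
      op A sg (exist _ (upd (proj1_sig s) (map (fun u => termop A u s) ts))
                       (tr_upd A _ _ (proj2_sig s)))
  end.

Lemma sig_eq_pi {X : Type} (P : X -> Prop) (x y : X) (p : P x) (q : P y) :
  x = y -> exist P x p = exist P y q.
Proof. intros ->; f_equal; apply proof_irrelevance. Qed.

Section Gen.
Context {tau : Type} (A : tAlg tau) (s : {s : nat -> car A | tr A s}).

Definition gen_car : Type := {x : car A | exists t : term tau, x = termop A t s}.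

Definition gen_tr (r : nat -> gen_car) : Prop :=
  equivN (fun n => proj1_sig (r n)) (proj1_sig s).

Lemma gen_ne : exists r, gen_tr r.
Proof.
  exists (fun n => exist _ (proj1_sig s n) (ex_intro _ (Var n) eq_refl)).
  apply equivN_refl.
Qed.

Lemma gen_closed : forall r r', equivN r r' -> gen_tr r -> gen_tr r'.
Proof.
  intros r r' [N H] h; apply (equivN_trans (s := fun n => proj1_sig (r n))).
  - exists N; intros i hi; rewrite H; auto.
  - exact h.
Qed.

Lemma gen_op_tr r : gen_tr r -> tr A (fun n => proj1_sig (r n)).
Proof. intro h; apply (@tr_closed _ A (proj1_sig s)); [apply equivN_sym, h | exact (proj2_sig s)]. Qed.

Lemma gen_terms (r : nat -> gen_car) : forall N, exists ts : list (term tau),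
  length ts = N /\ forall i, i < N -> termop A (nth i ts (Var 0)) s = proj1_sig (r i).
Proof.
  induction N as [|N [ts [hl ht]]].
  - exists nil; split; [reflexivity | intros; lia].
  - destruct (proj2_sig (r N)) as [t ht'].
    exists (ts ++ [t]); split.
    + rewrite length_app; simpl; lia.
    + intros i hi. destruct (Nat.lt_ge_cases i N) as [h|h].
      * rewrite app_nth1 by lia; auto.
      * assert (i = N) by lia; subst i.
        rewrite app_nth2 by lia; rewrite hl, Nat.sub_diag; simpl; auto.
Qed.

Lemma gen_op_mem sg r (h : gen_tr r) :
  exists t, op A sg (exist _ (fun n => proj1_sig (r n)) (gen_op_tr h)) = termop A t s.
Proof.
  destruct h as [N hN] eqn:E.
  destruct (gen_terms r N) as [ts [hl ht]].
  exists (App sg ts); simpl; f_equal; apply sig_eq_pi.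
  apply functional_extensionality; intro i; unfold upd.
  destruct (Nat.lt_ge_cases i N) as [hi|hi].
  - rewrite nth_indep with (d' := termop A (Var 0) s) by (rewrite length_map; lia).
    rewrite (map_nth (fun u => termop A u s)); symmetry; auto.
  - rewrite nth_overflow by (rewrite length_map; lia). auto.
Qed.

Definition gen_op (sg : tau) (r : {r : nat -> gen_car | gen_tr r}) : gen_car :=
  exist _ _ (gen_op_mem sg (proj2_sig r)).

Definition gen : tAlg tau := @TAlg tau gen_car gen_tr gen_ne gen_closed gen_op.
End Gen.

Section Restr.
Context {tau : Type} (A : tAlg tau) (s : {s : nat -> car A | tr A s}).

Definition restr_tr (r : nat -> car A) : Prop := equivN r (proj1_sig s).

Lemma restr_ne : exists r, restr_tr r.
Proof. exists (proj1_sig s); apply equivN_refl. Qed.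

Lemma restr_closed : forall r r', equivN r r' -> restr_tr r -> restr_tr r'.
Proof. intros r r' h h'; eapply equivN_trans; [apply equivN_sym, h | exact h']. Qed.

Lemma restr_sub r : restr_tr r -> tr A r.
Proof. intro h; apply (@tr_closed _ A (proj1_sig s)); [apply equivN_sym, h | exact (proj2_sig s)]. Qed.

Definition restr_op (sg : tau) (r : {r : nat -> car A | restr_tr r}) : car A :=
  op A sg (exist _ (proj1_sig r) (restr_sub (proj2_sig r))).

Definition restr : tAlg tau := @TAlg tau (car A) restr_tr restr_ne restr_closed restr_op.
End Restr.

Section Prod.
Context {tau : Type} (J : Type) (A : J -> tAlg tau).

Definition prod_car : Type := forall j, car (A j).

Definition prod_tr (S : nat -> prod_car) : Prop := forall j, tr (A j) (fun n => S n j).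

Lemma prod_ne : exists S, prod_tr S.
Proof.
  exists (fun n j => proj1_sig (constructive_indefinite_description _ (tr_ne (A j))) n).
  intro j; exact (proj2_sig (constructive_indefinite_description _ (tr_ne (A j)))).
Qed.

Lemma prod_closed : forall S S', equivN S S' -> prod_tr S -> prod_tr S'.
Proof.
  intros S S' [N H] h j; apply (@tr_closed _ (A j) (fun n => S n j)); [|apply h].
  exists N; intros i hi; rewrite H; auto.
Qed.

Definition prod_op (sg : tau) (S : {S : nat -> prod_car | prod_tr S}) : prod_car :=
  fun j => op (A j) sg (exist _ (fun n => proj1_sig S n j) (proj2_sig S j)).

Definition tprod : tAlg tau := @TAlg tau prod_car prod_tr prod_ne prod_closed prod_op.
End Prod.

Definition is_thom {tau} (A B : tAlg tau) (f : car A -> car B) : Prop :=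
  (forall s, tr A s -> tr B (fun n => f (s n))) /\
  (forall sg s (hA : tr A s) (hB : tr B (fun n => f (s n))),
      f (op A sg (exist _ s hA)) = op B sg (exist _ (fun n => f (s n)) hB)).

Definition is_onto_thom {tau} (A B : tAlg tau) (f : car A -> car B) : Prop :=
  is_thom A B f /\
  (forall y, exists x, f x = y) /\
  (forall r, tr B r -> exists s, tr A s /\ forall n, f (s n) = r n).

(** B is (an isomorphic copy of) a t-subalgebra of A: B's universe is identified
    with a subset of A's via an injective map i, B's trace is contained in A's,
    and B's operations are the restrictions of A's. *)
Definition is_tsub {tau} (B A : tAlg tau) : Prop :=
  exists i : car B -> car A,
    (forall x y, i x = i y -> x = y) /\
    (forall s, tr B s -> tr A (fun n => i (s n))) /\
    (forall sg s (hB : tr B s) (hA : tr A (fun n => i (s n))),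
        i (op B sg (exist _ s hB)) = op A sg (exist _ (fun n => i (s n)) hA)).

Definition t_variety {tau} (K : tAlg tau -> Prop) : Prop :=
  (forall A B : tAlg tau, K A -> (exists f, is_onto_thom A B f) -> K B) /\
  (forall A B : tAlg tau, K A -> is_tsub B A -> K B) /\
  (forall (J : Type) (A : J -> tAlg tau), (forall j, K (A j)) -> K (tprod A)).

Definition Et_variety {tau} (K : tAlg tau -> Prop) : Prop :=
  t_variety K /\
  (forall A : tAlg tau, (forall s : {s : nat -> car A | tr A s}, K (gen A s)) -> K A).

Definition Ft_variety {tau} (K : tAlg tau -> Prop) : Prop :=
  t_variety K /\
  (forall A : tAlg tau, (forall s : {s : nat -> car A | tr A s}, K (restr A s)) -> K A).

(** A finitary type rho = (rho_n)_n is given by the set rho* = [tau] of all symbols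
    together with the arity map [ar] (sigma ∈ rho_n iff ar sigma = n). *)
Definition rho_dimensional {tau} (ar : tau -> nat) (A : tAlg tau) : Prop :=
  forall sg s u (hs : tr A s) (hu : tr A u),
    equivN s u -> (forall i, i < ar sg -> s i = u i) ->
    op A sg (exist _ s hs) = op A sg (exist _ u hu).

(* Et ⇒ Ft: A_{\bar s} is a t-subalgebra of (A, [s]_N), which lies in K.

   Ft ⇒ Et: fix s and let u range over the threads u ≡ s.  Every element of A is
   generated by some such u, and any finite set of elements by "large" sets of them.
   Inside the product of the A_{\bar u} take the families p that agree, on a large
   set of u, with one element x of A; p ↦ x maps this t-subalgebra onto (A, [s]_N).
   It respects the operations because a ρ-dimensional σ reads only the first
   ar σ entries of a thread, and finitely many agreements hold simultaneously on a
   large set.  ρ-dimensionality of A itself follows from that of the A_{\bar u}: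
   two threads agreeing below ar σ and beyond N can both be rewritten, inside their
   own generated subalgebras, into a common thread. *)
From Stdlib Require Import List Arith Lia ClassicalEpsilon FunctionalExtensionality.
Import ListNotations.

Lemma op_ext {tau} (A : tAlg tau) sg (v w : nat -> car A) hv hw :
  v = w -> op A sg (exist _ v hv) = op A sg (exist _ w hw).
Proof. intros; f_equal; apply sig_eq_pi; auto. Qed.

Section RhoDimensionalOfGen.
Context {tau : Type} (ar : tau -> nat) (A : tAlg tau).
Hypothesis gen_dim : forall u : {u : nat -> car A | tr A u}, rho_dimensional ar (gen A u).

(* v ∘ f lives in the subalgebra generated by v, where ρ-dimensionality applies. *)
Lemma op_reindex sg (v : nat -> car A) (hv : tr A v) (f : nat -> nat)
  (hf : forall i, i < ar sg -> f i = i) (hvf : equivN (fun i => v (f i)) v)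
  (hvf' : tr A (fun i => v (f i))) :
  op A sg (exist _ v hv) = op A sg (exist _ (fun i => v (f i)) hvf').
Proof.
  set (vs := exist (fun s => tr A s) v hv).
  pose (V := fun n => (exist _ (v n) (ex_intro _ (Var n) eq_refl) : gen_car A vs)).
  pose (W := fun n => V (f n)).
  assert (hV : @gen_tr _ A vs V) by apply equivN_refl.
  assert (hW : @gen_tr _ A vs W) by exact hvf.
  assert (hVW : equivN V W).
  { destruct hvf as [N hN]; exists N; intros; unfold V, W; apply sig_eq_pi; symmetry; auto. }
  assert (hlt : forall i, i < ar sg -> V i = W i).
  { intros i hi; unfold W; rewrite hf; auto. }
  pose proof (f_equal (@proj1_sig _ _) (gen_dim vs sg V W hV hW hVW hlt)) as E; simpl in E.
  etransitivity; [|etransitivity; [exact E|]]; apply op_ext; reflexivity.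
Qed.

Lemma rho_dimensional_of_gen : rho_dimensional ar A.
Proof.
  intros sg w w' hw hw' [N H] Hlt.
  pose (M := N + ar sg).
  (* collapse the positions in [ar sg, M), where w and w' may differ, onto M *)
  pose (f := fun i => if i <? ar sg then i else if i <? M then M else i).
  assert (hf : forall i, i < ar sg -> f i = i).
  { intros i hi; unfold f; destruct (Nat.ltb_spec i (ar sg)); lia. }
  assert (hvf : forall v : nat -> car A, equivN (fun i => v (f i)) v).
  { intros v; exists M; intros i hi; unfold f.
    destruct (Nat.ltb_spec i (ar sg)); [lia|]. destruct (Nat.ltb_spec i M); [lia|]. auto. }
  assert (htr : forall v, tr A v -> tr A (fun i => v (f i))).
  { intros v hv; apply (@tr_closed _ A v); [apply equivN_sym, hvf | exact hv]. }
  rewrite (op_reindex sg w hw f hf (hvf w) (htr w hw)),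
          (op_reindex sg w' hw' f hf (hvf w') (htr w' hw')).
  apply op_ext, functional_extensionality; intro i; unfold f.
  destruct (Nat.ltb_spec i (ar sg)); [auto|].
  destruct (Nat.ltb_spec i M); apply H; lia.
Qed.
End RhoDimensionalOfGen.

Section AgreementSubalgebra.
Context {tau : Type} (ar : tau -> nat) (A : tAlg tau) (s : {s : nat -> car A | tr A s}).
Hypothesis A_dim : rho_dimensional ar A.

Definition cls : Type := {u : nat -> car A | equivN u (proj1_sig s)}.

Definition cls_thread (u : cls) : {s : nat -> car A | tr A s} :=
  exist _ (proj1_sig u) (@tr_closed _ A _ _ (equivN_sym (proj2_sig u)) (proj2_sig s)).

Definition gen_prod : tAlg tau := tprod (fun u : cls => gen A (cls_thread u)).

Definition generated (u : cls) (x : car A) : Prop := exists t, x = termop A t (cls_thread u).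

Definition large (X : cls -> Prop) : Prop :=
  exists L : list (car A), forall u, (forall x, In x L -> generated u x) -> X u.

Lemma large_and X Y : large X -> large Y -> large (fun u => X u /\ Y u).
Proof.
  intros [L1 h1] [L2 h2]; exists (L1 ++ L2); intros u hu; split;
    [apply h1 | apply h2]; intros x hx; apply hu, in_or_app; auto.
Qed.

Lemma large_nonempty X : large X -> exists u, X u.
Proof.
  intros [L h].
  exists (exist (fun u => equivN u (proj1_sig s)) (upd (proj1_sig s) L) (upd_equiv _ _) : cls).
  apply h; intros x hx.
  destruct (In_nth L x x hx) as [i [hi e]].
  exists (Var i); simpl; unfold upd; rewrite nth_indep with (d' := x) by exact hi; auto.
Qed.

Lemma large_forall_lt (X : nat -> cls -> Prop) :
  (forall i, large (X i)) -> forall k, large (fun u => forall i, i < k -> X i u).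
Proof.
  intros h; induction k as [|k IHk].
  - exists nil; intros; lia.
  - destruct (large_and _ _ IHk (h k)) as [L hL]; exists L; intros u hu i hi.
    destruct (hL u hu) as [hlt hk].
    destruct (Nat.eq_dec i k); [subst; auto | apply hlt; lia].
Qed.

Lemma generated_var (u : cls) n : generated u (proj1_sig u n).
Proof. exists (Var n); reflexivity. Qed.

(* x as an element of A_{\bar u}; an arbitrary junk value when u does not generate x *)
Definition to_gen (u : cls) (x : car A) : gen_car A (cls_thread u) :=
  match excluded_middle_informative (generated u x) with
  | left h => exist _ x h
  | right _ => exist _ (proj1_sig u 0) (generated_var u 0)
  end.

Lemma to_gen_val u x : generated u x -> proj1_sig (to_gen u x) = x.
Proof.
  intro h; unfold to_gen; destruct (excluded_middle_informative (generated u x));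
    [auto | contradiction].
Qed.

Definition agrees (p : car gen_prod) (x : car A) : Prop := large (fun u => proj1_sig (p u) = x).

Definition agree_car : Type := {px : car gen_prod * car A | agrees (fst px) (snd px)}.

Definition agree_emb (c : agree_car) : car gen_prod := fst (proj1_sig c).
Definition agree_val (c : agree_car) : car A := snd (proj1_sig c).

Lemma agrees_diag x : agrees (fun u => to_gen u x) x.
Proof. exists [x]; intros u hu; apply to_gen_val, hu; simpl; auto. Qed.

Definition diag (x : car A) : agree_car := exist _ (fun u => to_gen u x, x) (agrees_diag x).

Definition agree_tr (S : nat -> agree_car) : Prop :=
  tr gen_prod (fun n => agree_emb (S n)) /\ equivN (fun n => agree_val (S n)) (proj1_sig s).

Lemma agree_tr_diag (r : nat -> car A) : equivN r (proj1_sig s) -> agree_tr (fun n => diag (r n)).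
Proof.
  intros hr; split; [|exact hr].
  intro u; simpl; unfold gen_tr; simpl.
  destruct (equivN_trans hr (equivN_sym (proj2_sig u))) as [N hN].
  exists N; intros i hi; change (proj1_sig (to_gen u (r i)) = proj1_sig u i).
  rewrite to_gen_val; [auto|]. rewrite hN by auto; apply generated_var.
Qed.

Lemma agree_tr_ne : exists S, agree_tr S.
Proof. exists (fun n => diag (proj1_sig s n)); apply agree_tr_diag, equivN_refl. Qed.

Lemma agree_tr_closed : forall S S', equivN S S' -> agree_tr S -> agree_tr S'.
Proof.
  intros S S' [N hN] [h1 h2]; split.
  - apply (@tr_closed _ gen_prod (fun n => agree_emb (S n))); [|exact h1].
    exists N; intros i hi; rewrite hN; auto.
  - apply (equivN_trans (s := fun n => agree_val (S n))); [|exact h2].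
    exists N; intros i hi; rewrite hN; auto.
Qed.

Lemma agree_tr_val S : agree_tr S -> tr A (fun n => agree_val (S n)).
Proof.
  intros [_ h]; apply (@tr_closed _ A (proj1_sig s)); [apply equivN_sym, h | exact (proj2_sig s)].
Qed.

Lemma agrees_op sg (S : {S : nat -> agree_car | agree_tr S}) :
  agrees (op gen_prod sg (exist _ (fun n => agree_emb (proj1_sig S n)) (proj1 (proj2_sig S))))
         (op A sg (exist _ (fun n => agree_val (proj1_sig S n)) (agree_tr_val _ (proj2_sig S)))).
Proof.
  destruct S as [S hS]; simpl.
  destruct (large_forall_lt (fun i u => proj1_sig (agree_emb (S i) u) = agree_val (S i))
              (fun i => proj2_sig (S i)) (ar sg)) as [L hL].
  exists L; intros u hu; simpl.
  apply A_dim; [|apply hL, hu].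
  eapply equivN_trans; [apply (proj1 hS u)|].
  eapply equivN_trans; [apply (proj2_sig u)|]. apply equivN_sym, (proj2 hS).
Qed.

Definition agree_op sg (S : {S : nat -> agree_car | agree_tr S}) : agree_car :=
  exist (fun px : car gen_prod * car A => agrees (fst px) (snd px)) (_, _) (agrees_op sg S).

Definition agree_alg : tAlg tau :=
  @TAlg tau agree_car agree_tr agree_tr_ne agree_tr_closed agree_op.

Lemma agree_alg_tsub : is_tsub agree_alg gen_prod.
Proof.
  exists agree_emb; split; [|split].
  - intros [[p x] hx] [[q y] hy]; unfold agree_emb; simpl; intros <-.
    destruct (large_nonempty _ (large_and _ _ hx hy)) as [u [e1 e2]]; simpl in *.
    apply sig_eq_pi; congruence.
  - intros S [h _]; exact h.
  - intros sg S hB hA; simpl; unfold agree_emb; simpl.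
    f_equal; apply sig_eq_pi; reflexivity.
Qed.

Lemma agree_val_onto : is_onto_thom agree_alg (restr A s) agree_val.
Proof.
  split; [split|split].
  - intros S [_ h]; exact h.
  - intros sg S hA hB; simpl; unfold restr_op, agree_val; simpl; apply op_ext; reflexivity.
  - intros y; exists (diag y); reflexivity.
  - intros r hr; exists (fun n => diag (r n)); split; [apply agree_tr_diag, hr | reflexivity].
Qed.
End AgreementSubalgebra.

Lemma gen_tsub_restr {tau} (A : tAlg tau) (s : {s : nat -> car A | tr A s}) :
  is_tsub (gen A s) (restr A s).
Proof.
  exists (@proj1_sig _ _); split; [|split].
  - intros [x hx] [y hy]; simpl; intros <-; apply sig_eq_pi; auto.
  - intros r h; exact h.
  - intros sg r hB hA; simpl; unfold restr_op; apply op_ext; reflexivity.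
Qed.

Lemma Et_variety_of_Ft_variety {tau} (ar : tau -> nat) (K : tAlg tau -> Prop) :
  (forall A, K A -> rho_dimensional ar A) -> Ft_variety K -> Et_variety K.
Proof.
  intros Kdim [[Khom [Ksub Kprod]] KF]; split; [repeat split; auto|].
  intros A Kgen; apply KF; intro s.
  assert (A_dim : rho_dimensional ar A)
    by (apply (rho_dimensional_of_gen ar A); intro u; apply Kdim, Kgen).
  apply (Khom (agree_alg ar A s A_dim)); [|exists (agree_val A s); apply agree_val_onto].
  apply (Ksub (gen_prod A s)); [|apply agree_alg_tsub].
  apply Kprod; intro u; apply Kgen.
Qed.

Lemma Ft_variety_of_Et_variety {tau} (K : tAlg tau -> Prop) : Et_variety K -> Ft_variety K.
Proof.
  intros [[Khom [Ksub Kprod]] KE]; split; [repeat split; auto|].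
  intros A Krestr; apply KE; intro s.
  apply (Ksub (restr A s)); [apply Krestr | apply gen_tsub_restr].
Qed.

Theorem mainTheorem13 (tau : Type) (ar : tau -> nat) (K : tAlg tau -> Prop) :
  (forall A, K A -> rho_dimensional ar A) ->
  (Ft_variety K <-> Et_variety K).
Proof.
  intros Kdim; split; [apply (Et_variety_of_Ft_variety ar), Kdim | apply Ft_variety_of_Et_variety].
Qed.
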